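(* Let $(X,\rho)$ be a metric space and let $f,g$ be unbounded moduli. Then for all $A,B\in CL(X)$ and every sequence $(A_k)\subset CL(X)$, if $(A_k)$ is $f$-Wijsman statistically convergent to $A$ and $g$-Wijsman statistically convergent to $B$, then $A=B$.
   Context: A modulus is a function $f\colon[0,\infty)\to[0,\infty)$ such that $f(x)=0$ iff $x=0$, $f$ is subadditive, increasing and continuous. $CL(X)$ denotes the set of all non-empty closed subsets of $(X,\rho)$, and $d(x,B)=\inf_{y\in B}\rho(x,y)$. For an unbounded modulus $f$ and $K\subseteq\mathbb N$, the $f$-density is $d^f(K)=\lim_{n\to\infty}\frac{f(|\{k\le n:k\in K\}|)}{f(n)}$ (when the limit exists). A real sequence $(x_k)$ is $f$-statistically convergent to $l$ if for every $\varepsilon>0$ the set $\{k:|x_k-l|\ge\varepsilon\}$ has $f$-density $0$. $(A_k)\subset CL(X)$ is $f$-Wijsman statistically convergent to $A\in CL(X)$ if for every $x\in X$ the sequence $(d(x,A_k))$ is $f$-statistically convergent to $d(x,A)$. *)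

From HB Require Import structures.
From mathcomp Require Import all_boot all_order all_algebra.
From mathcomp Require Import all_classical all_reals all_analysis.
Set Implicit Arguments. Unset Strict Implicit. Unset Printing Implicit Defensive.
Import Order.TTheory GRing.Theory Num.Theory.
Import numFieldNormedType.Exports.
Local Open Scope classical_set_scope.
Local Open Scope ring_scope.

Definition is_metric (R : realType) (X : Type) (rho : X -> X -> R) : Prop :=
  (forall x y, 0 <= rho x y) /\
  (forall x y, rho x y = 0 <-> x = y) /\
  (forall x y, rho x y = rho y x) /\
  (forall x y z, rho x z <= rho x y + rho y z).

Definition mclosed (R : realType) (X : Type) (rho : X -> X -> R) (A : set X) : Prop :=
  forall x, ~ A x -> exists2 r : R, 0 < r & forall y, rho x y < r -> ~ A y.

Definition CL (R : realType) (X : Type) (rho : X -> X -> R) (A : set X) : Prop :=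
  A !=set0 /\ mclosed rho A.

Definition dist (R : realType) (X : Type) (rho : X -> X -> R) (x : X) (B : set X) : R :=
  inf [set rho x y | y in B].

(* modulus f : [0,oo) -> [0,oo) (represented as f : R -> R, conditions on [0,oo)) *)
Definition modulus (R : realType) (f : R -> R) : Prop :=
  (forall x, 0 <= x -> 0 <= f x) /\
  (forall x, 0 <= x -> (f x = 0 <-> x = 0)) /\
  (forall x y, 0 <= x -> 0 <= y -> f (x + y) <= f x + f y) /\
  (forall x y, 0 <= x -> x <= y -> f x <= f y) /\
  {within [set x : R | 0 <= x], continuous f}.

Definition unbounded_modulus (R : realType) (f : R -> R) : Prop :=
  modulus f /\ (forall M : R, exists2 x : R, 0 <= x & M < f x).

(* K subset of N = {1,2,...} (given as a boolean predicate) has f-density 0: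
   lim_n f(|{k <= n : k in K}|) / f(n) exists and equals 0 *)
Definition fdensity_zero (R : realType) (f : R -> R) (K : nat -> bool) : Prop :=
  (fun n : nat => f (count K (iota 1 n))%:R / f n%:R) @ \oo --> (0 : R).

Definition fstat_cvg (R : realType) (f : R -> R) (x : nat -> R) (l : R) : Prop :=
  forall eps : R, 0 < eps -> fdensity_zero f (fun k => eps <= `|x k - l|).

Definition fWijsman_stat_cvg (R : realType) (X : Type) (rho : X -> X -> R)
  (f : R -> R) (Ak : nat -> set X) (A : set X) : Prop :=
  forall x : X, fstat_cvg f (fun k => dist rho x (Ak k)) (dist rho x A).

(** For a modulus [f] and [n <= 2 c] subadditivity and monotonicity give
    [f n <= 2 f c].  If [K1] and [K2] cover the positive integers, then for
    every [n] one of them has at least [n/2] elements in [[1, n]], so the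
    corresponding ratio [f (|K ∩ [1, n]|) / f n] is at least [1/2]: the two
    sets cannot both have density zero, even for two different moduli.
    Two distinct statistical limits [l1], [l2] of one sequence would yield
    such a covering, with [K_i] the indices at distance at least
    [|l1 - l2| / 2] from [l_i].  Hence [d(x, A) = d(x, B)] for every [x],
    and a closed set is the zero set of its distance function. *)

From mathcomp Require Import all_boot all_order all_algebra.
From mathcomp Require Import all_classical all_reals all_analysis.
From mathcomp Require Import lra zify.
Import Order.TTheory GRing.Theory Num.Theory.
Import numFieldNormedType.Exports.
Local Open Scope classical_set_scope.
Local Open Scope ring_scope.

Section Modulus.
Context {R : realType} {f : R -> R} (hf : modulus f).

Lemma modulus_gt0 (x : R) : 0 < x -> 0 < f x.
Proof.
case: hf => f_ge0 [f_eq0 _] x_gt0; rewrite lt0r f_ge0 ?ltW // andbT.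
by apply/eqP => /(f_eq0 _ (ltW x_gt0)) x0; rewrite x0 ltxx in x_gt0.
Qed.

Lemma modulus_le_double (x : R) {y : R} : 0 <= y -> y <= 2 * x -> f y <= 2 * f x.
Proof.
case: hf => _ [_ [f_subadd [f_mono _]]] y_ge0 le_y2x.
have x_ge0 : 0 <= x by lra.
have := f_subadd _ _ x_ge0 x_ge0.
have := f_mono y (x + x) y_ge0 ltac:(lra).
lra.
Qed.

Lemma modulus_ratio_ge_half (x y : R) : 0 < y -> y <= 2 * x -> 1 / 2 <= f x / f y.
Proof.
move=> y_gt0 le_y2x; rewrite ler_pdivlMr ?modulus_gt0 //.
have := modulus_le_double x (ltW y_gt0) le_y2x; lra.
Qed.

End Modulus.

Lemma count_cover_ge {T : Type} {K1 K2 : pred T} (s : seq T) :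
  (forall k, K1 k || K2 k) -> (size s <= count K1 s + count K2 s)%N.
Proof.
move=> cover; rewrite -count_predUI.
suff -> : count (predU K1 K2) s = size s by rewrite leq_addr.
by elim: s => //= k s ->; rewrite cover.
Qed.

Lemma fdensity_zero_lt_half (R : realType) (f : R -> R) (K : nat -> bool) :
  fdensity_zero f K -> \forall n \near \oo, f (count K (iota 1 n))%:R / f n%:R < 1 / 2.
Proof.
move=> K0; near=> n; apply: ltr_normlW; near: n.
by apply: cvgr0_norm_lt K0 _ _; lra.
Unshelve. all: by end_near.
Qed.

Lemma fdensity_zero_cover (R : realType) (f g : R -> R) (K1 K2 : nat -> bool) :
  modulus f -> modulus g -> (forall k, K1 k || K2 k) ->
  fdensity_zero f K1 -> fdensity_zero g K2 -> False.
Proof.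
move=> hf hg cover /fdensity_zero_lt_half K1_small /fdensity_zero_lt_half K2_small.
have [n [[small1 small2] n_gt0]] :=
  filter_ex (filterI (filterI K1_small K2_small) (nbhs_infty_gt 0%N)).
have := count_cover_ge (iota 1 n) cover; rewrite size_iota.
set c1 := count K1 _; set c2 := count K2 _ => le_n_c12.
have n_gt0R : (0 : R) < n%:R by rewrite ltr0n.
have [le_n_2c1 | le_n_2c2] : (n <= 2 * c1)%N \/ (n <= 2 * c2)%N by lia.
- have := modulus_ratio_ge_half hf c1%:R _ n_gt0R.
  by rewrite -natrM ler_nat => /(_ le_n_2c1); lra.
- have := modulus_ratio_ge_half hg c2%:R _ n_gt0R.
  by rewrite -natrM ler_nat => /(_ le_n_2c2); lra.
Qed.

Lemma fstat_cvg_unique (R : realType) (f g : R -> R) (u : nat -> R) (l1 l2 : R) :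
  modulus f -> modulus g -> fstat_cvg f u l1 -> fstat_cvg g u l2 -> l1 = l2.
Proof.
move=> hf hg u_l1 u_l2; apply: contrapT => /eqP l12.
have eps_gt0 : 0 < `|l1 - l2| / 2 by rewrite divr_gt0 // normr_gt0 subr_eq0.
apply: fdensity_zero_cover hf hg _ (u_l1 _ eps_gt0) (u_l2 _ eps_gt0) => k.
have := ler_distD (u k) l1 l2; rewrite (distrC l1 (u k)).
by case: (lerP (`|l1 - l2| / 2) `|u k - l1|) => //= near_l1 dist_l12; lra.
Qed.

Section Distance.
Context {R : realType} {X : Type} {rho : X -> X -> R}.
Hypotheses (rho_ge0 : forall x y, 0 <= rho x y) (rho_xx : forall x, rho x x = 0).

Lemma dist_ge0 (x : X) (B : set X) : B !=set0 -> 0 <= dist rho x B.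
Proof.
move=> [y By]; apply: lb_le_inf; first by exists (rho x y), y.
by move=> _ [z _ <-]; exact: rho_ge0.
Qed.

Lemma dist_eq0 (x : X) {B : set X} : CL rho B -> dist rho x B = 0 <-> B x.
Proof.
case=> B0 B_closed; split => [dist0 | Bx].
- apply: contrapT => /B_closed [r r_gt0 ball_outside].
  suff : r <= dist rho x B by rewrite dist0 leNgt r_gt0.
  apply: lb_le_inf => [|_ [y By <-]]; first by case: B0 => y By; exists (rho x y), y.
  by rewrite leNgt; apply/negP => /ball_outside.
- apply/eqP; rewrite eq_le dist_ge0 // andbT -(rho_xx x).
  by apply: ge_inf; [exists 0 => _ [y _ <-] | exists x].
Qed.

Lemma CL_dist_inj {A B : set X} : CL rho A -> CL rho B ->
  (forall x, dist rho x A = dist rho x B) -> A = B.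
Proof.
move=> hA hB eq_dist; apply/seteqP; split => x.
- by move=> /(dist_eq0 x hA); rewrite eq_dist => /(dist_eq0 x hB).
- by move=> /(dist_eq0 x hB); rewrite -eq_dist => /(dist_eq0 x hA).
Qed.

End Distance.

Theorem theorem2p3 (R : realType) (X : Type) (rho : X -> X -> R)
  (hrho : is_metric rho) (f g : R -> R)
  (hf : unbounded_modulus f) (hg : unbounded_modulus g)
  (A B : set X) (Ak : nat -> set X)
  (hA : CL rho A) (hB : CL rho B) (hAk : forall k, CL rho (Ak k)) :
  fWijsman_stat_cvg rho f Ak A -> fWijsman_stat_cvg rho g Ak B -> A = B.
Proof.
move=> cvgA cvgB; case: hrho => rho_ge0 [rho_eq0 _].
have rho_xx x : rho x x = 0 by apply/rho_eq0.
apply: (CL_dist_inj rho_ge0 rho_xx hA hB) => x.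
exact: fstat_cvg_unique (proj1 hf) (proj1 hg) (cvgA x) (cvgB x).
Qed.
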